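(* Let $q,h,K$ be complex numbers with $K(1+q)\neq1$, and set $K'=K\big(K(1+q)-1\big)^{-1}$. For any complex $L$ let $$\hat R(L;q,h)=\begin{pmatrix}1&0&0&Lh\\0&1-L&Lq&0\\0&L&1-Lq&0\\0&0&0&1-L(q+1)\end{pmatrix},\qquad R(L;q,h)=P\hat R(L;q,h).$$ Then $R(K';q,h)$ is invertible and $$P\,R(K;q,h)\,P=\big(R(K';q,h)\big)^{-1}.$$ In particular, for $K=2(1+q)^{-1}$ (assuming $q\neq-1$) one has $K'=K$ and $\hat R(K;q,h)^2=I_4$.
   Context: Matrices are written in the ordered basis $e_1\otimes e_1,e_1\otimes e_2,e_2\otimes e_1,e_2\otimes e_2$ of $\mathbb{C}^2\otimes\mathbb{C}^2$; $P$ is the flip matrix, i.e. the $4\times4$ permutation matrix swapping the second and third basis vectors. The matrix $PRP$ is what the paper denotes $(21)R$. *)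

From HB Require Import structures.
From mathcomp Require Import all_boot all_order all_algebra.
From mathcomp Require Import complex reals.
Set Implicit Arguments. Unset Strict Implicit. Unset Printing Implicit Defensive.
Import Order.TTheory GRing.Theory Num.Theory.
Local Open Scope ring_scope.

(* Basis order: e1⊗e1, e1⊗e2, e2⊗e1, e2⊗e2  <->  indices 0,1,2,3. *)

Definition flipP {F : nzRingType} : 'M[F]_4 :=
  \matrix_(i < 4, j < 4)
    (if ((i : nat), (j : nat)) is ((0, 0) | (1, 2) | (2, 1) | (3, 3))
     then 1 else 0).

Definition Rhat {F : nzRingType} (L q h : F) : 'M[F]_4 :=
  \matrix_(i < 4, j < 4)
    match (i : nat), (j : nat) with
    | 0, 0 => 1
    | 0, 3 => L * h
    | 1, 1 => 1 - L
    | 1, 2 => L * q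
    | 2, 1 => L
    | 2, 2 => 1 - L * q
    | 3, 3 => 1 - L * (q + 1)
    | _, _ => 0
    end.

Definition Rmat {F : nzRingType} (L q h : F) : 'M[F]_4 := flipP *m Rhat L q h.

Definition Kprime {F : fieldType} (K q : F) : F := K / (K * (1 + q) - 1).

From HB Require Import structures.
From mathcomp Require Import all_boot all_order all_algebra.
From mathcomp Require Import complex reals ring.
Import Order.TTheory GRing.Theory Num.Theory.
Local Open Scope ring_scope.

(* Since [P^2 = 1], [P R(K) P * R(K')] collapses to [Rhat(K) * Rhat(K')], which is
   the identity by a direct entrywise computation; the case [K = 2/(1+q)] is the
   fixed point [K' = K] of [K |-> K'], where the same identity reads [Rhat(K)^2 = 1]. *)

Lemma mulmx1_invmx (F : comUnitRingType) (n : nat) (A B : 'M[F]_n) :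
  A *m B = 1%:M -> B \in unitmx /\ A = invmx B.
Proof.
move=> AB1; have [_ Bunit] := mulmx1_unit AB1.
by split=> //; rewrite -[LHS]mulmx1 -(mulmxV Bunit) mulmxA AB1 mul1mx.
Qed.

Lemma flipP_mulmx_flipP (F : comNzRingType) : (flipP : 'M[F]_4) *m flipP = 1.
Proof.
apply/matrixP => i j; rewrite !mxE !big_ord_recr big_ord0 /= !mxE.
by case: i => [[|[|[|[|i]]]] ?] //; case: j => [[|[|[|[|j]]]] ?] //=; ring.
Qed.

Lemma flipP_conj_Rmat_mul (F : comNzRingType) (K L q h : F) :
  flipP *m Rmat K q h *m flipP *m Rmat L q h = Rhat K q h *m Rhat L q h.
Proof.
by rewrite /Rmat !mulmxA flipP_mulmx_flipP mul1mx -(mulmxA (Rhat K q h))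
  flipP_mulmx_flipP mulmx1.
Qed.

Lemma Rhat_mul_Kprime (F : fieldType) (K q h : F) : K * (1 + q) != 1 ->
  Rhat K q h *m Rhat (Kprime K q) q h = 1.
Proof.
rewrite -subr_eq0 => den_neq0.
apply/matrixP => i j; rewrite !mxE !big_ord_recr big_ord0 /= !mxE /Kprime.
by case: i => [[|[|[|[|i]]]] ?] //; case: j => [[|[|[|[|j]]]] ?] //=; field.
Qed.

Section SelfDual.

Variables (F : fieldType) (q : F).
Hypothesis q_neq_m1 : q != -1.

Let one_plus_q_neq0 : 1 + q != 0.
Proof. by rewrite addrC addr_eq0. Qed.

Lemma self_dual_mul : 2 / (1 + q) * (1 + q) = 2.
Proof. exact: divfK. Qed.

Lemma Kprime_self_dual : Kprime (2 / (1 + q)) q = 2 / (1 + q).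
Proof. by rewrite /Kprime self_dual_mul [2 - 1]addrK divr1. Qed.

Lemma Rhat_self_dual_invol (h : F) : Rhat (2 / (1 + q)) q h ^+ 2 = 1.
Proof.
rewrite expr2 -{2}Kprime_self_dual; apply: Rhat_mul_Kprime.
by rewrite self_dual_mul -subr_eq0 [2 - 1]addrK oner_neq0.
Qed.

End SelfDual.

Theorem mainTheorem11 (R : realType) :
  (forall q h K : R[i], K * (1 + q) != 1 ->
     Rmat (Kprime K q) q h \in unitmx /\
     flipP *m Rmat K q h *m flipP = invmx (Rmat (Kprime K q) q h)) /\
  (forall q h : R[i], q != -1 ->
     let K := 2 / (1 + q) in
     Kprime K q = K /\ Rhat K q h ^+ 2 = 1).
Proof.
split=> [q h K K_ok | q h q_ok K].
  by apply: mulmx1_invmx; rewrite flipP_conj_Rmat_mul Rhat_mul_Kprime.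
by split; [exact: Kprime_self_dual | exact: Rhat_self_dual_invol].
Qed.
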